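(* In the virtually-$\mathbb{Z}$ setting described in the context, let $\Phi$ be a cellular automaton on $A^G$ with neighborhood $S$ and $\Delta=\max\{\mathrm{imp}(s):s\in S\}$. For $i=1,2$ let $u_i$ be a word with domain $L_i=V_{[p_i,q_i]}$ which is $V_i$-blocking for $\Phi$, where $V_i=V_{[a_i,b_i]}$. Suppose $l(V_i)\geq\Delta$ for $i=1,2$, $q_1<p_2$ and $a_1\leq b_2$. Let $x\in A^G$ satisfy $x|_{L_1}=u_1$ and $x|_{L_2}=u_2$, and let $u=x|_L$ where $L=V_{[p_1,q_2]}$. Then $u$ is $V$-blocking for $\Phi$, where $V=V_{[a_1,b_2]}$.
   Context: $G$ is a finitely generated group, $A$ a finite alphabet, $H\leq G$ a subgroup of finite index and $\varphi:H\to\mathbb{Z}$ a group isomorphism. $F\subseteq G$ is a finite set with $1_G\in F$ containing exactly one element of each right coset $Hg$, so every $g\in G$ decomposes uniquely as $g=zf$ with $z\in H$, $f\in F$. Define $p:G\to\mathbb{Z}$ by $p(zf)=\varphi(z)$. For $X\subseteq\mathbb{Z}$, $V_X=p^{-1}(X)$; $V_{\{k\}}$ is the $k$-th vertebra; $V_X$ is a section if $X=[a,b]$ is a finite integer interval, with length $l(V_{[a,b]})=b-a+1$. For $s\in G$, $\mathrm{imp}(s)=\max\{|p(gs)-p(g)|:g\in V_{\{k\}}\}$, which is independent of $k$. A cellular automaton $\Phi$ with neighborhood $S\subseteq G$ finite and local map $\mu:A^S\to A$ is $\Phi(x)(g)=\mu(s\mapsto x(gs))$. For finite $V\subseteq G$,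 a pattern $u\in A^L$ ($L\subseteq G$ finite) is $V$-blocking for $\Phi$ if for all $x,y\in A^G$ with $x|_L=y|_L=u$ one has $\Phi^t(x)|_V=\Phi^t(y)|_V$ for all $t\in\mathbb{N}$. *)

From Stdlib Require Import ZArith List Lia.
Open Scope Z_scope.

Section Defs.
Context {G : Type} (mul : G -> G -> G) (one : G) (inv : G -> G).

Definition group_axioms : Prop :=
  (forall x y z, mul x (mul y z) = mul (mul x y) z) /\
  (forall x, mul one x = x) /\ (forall x, mul x one = x) /\
  (forall x, mul (inv x) x = one) /\ (forall x, mul x (inv x) = one).

Inductive generated (gens : list G) : G -> Prop :=
| gen_one : generated gens one
| gen_mul : forall s g, In s gens -> generated gens g -> generated gens (mul g s)
| gen_mulinv : forall s g, In s gens -> generated gens g -> generated gens (mul g (inv s)).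

Definition finitely_generated : Prop :=
  exists gens : list G, forall g, generated gens g.

Definition subgroup (H : G -> Prop) : Prop :=
  H one /\ (forall x y, H x -> H y -> H (mul x y)) /\ (forall x, H x -> H (inv x)).

Definition iso_to_Z (H : G -> Prop) (phi : G -> Z) : Prop :=
  (forall x y, H x -> H y -> phi (mul x y) = phi x + phi y) /\
  (forall x y, H x -> H y -> phi x = phi y -> x = y) /\
  (forall n, exists z, H z /\ phi z = n).

(* F contains exactly one element of each right coset H g *)
Definition right_transversal (H : G -> Prop) (F : list G) : Prop :=
  (forall g, exists f, In f F /\ H (mul f (inv g))) /\
  (forall f1 f2, In f1 F -> In f2 F -> H (mul f1 (inv f2)) -> f1 = f2).

Definition is_projection (H : G -> Prop) (phi : G -> Z) (F : list G) (p : G -> Z) : Prop :=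
  forall z f, H z -> In f F -> p (mul z f) = phi z.

Definition section (p : G -> Z) (a b : Z) : G -> Prop := fun g => a <= p g <= b.
Definition sec_length (a b : Z) : Z := b - a + 1.

Definition is_imp (p : G -> Z) (s : G) (n : Z) : Prop :=
  (exists g, p g = 0 /\ n = Z.abs (p (mul g s) - p g)) /\
  (forall g, p g = 0 -> Z.abs (p (mul g s) - p g) <= n).

Definition is_Delta (p : G -> Z) (S : list G) (D : Z) : Prop :=
  (forall s, In s S -> exists n, is_imp p s n /\ n <= D) /\
  (S <> nil -> exists s n, In s S /\ is_imp p s n /\ n = D) /\
  (S = nil -> D = 0).

Definition CA {A : Type} (S : list G) (mu : ({s : G | In s S} -> A) -> A)
  (x : G -> A) : G -> A :=
  fun g => mu (fun s => x (mul g (proj1_sig s))).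

(* u (only its values on L matter) is a pattern on L that is V-blocking *)
Definition blocking {A : Type} (Phi : (G -> A) -> (G -> A))
  (V L : G -> Prop) (u : G -> A) : Prop :=
  forall x y : G -> A,
    (forall g, L g -> x g = u g) -> (forall g, L g -> y g = u g) ->
    forall (t : nat) g, V g -> Nat.iter t Phi x g = Nat.iter t Phi y g.

End Defs.

(* Let [X] and [Y] agree with [x] on [L]. Then they agree with [u_i] on [L_i],
   so their orbits agree on [V_1] and on [V_2] at all times. If a level of
   [V_i] lay outside [L_i], changing a configuration on that level alone would
   change it at time 0, so (unless the alphabet is trivial) [V] lies inside [L]
   and the orbits agree on [V] at time 0. A point of [V] strictly between [V_1]
   and [V_2] only sees points whose level differs by at most [Delta]; since
   [V_1] and [V_2] are at least [Delta] thick these points stay in [V], and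
   induction on time finishes the proof. *)
From Stdlib Require Import ZArith List Lia FunctionalExtensionality.
Open Scope Z_scope.

Section Projection.
Context {G : Type} (mul : G -> G -> G) (one : G) (inv : G -> G).
Hypothesis HG : group_axioms mul one inv.
Variable H : G -> Prop.
Hypothesis HH : subgroup mul one inv H.
Variable phi : G -> Z.
Hypothesis Hphi : iso_to_Z mul H phi.
Variable F : list G.
Hypothesis HF : right_transversal mul inv H F.
Variable p : G -> Z.
Hypothesis Hp : is_projection mul H phi F p.

Lemma mul_eq_one_inv a b : mul a b = one -> a = inv b.
Proof.
  destruct HG as (Hassoc & _ & Hr & _ & Hir); intros E.
  now rewrite <- (Hr a), <- (Hir b), Hassoc, E, (proj1 (proj2 HG)).
Qed.

Lemma inv_mul_inv f g : inv (mul f (inv g)) = mul g (inv f).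
Proof.
  destruct HG as (Hassoc & Hl & _ & Hil & Hir).
  symmetry; apply mul_eq_one_inv.
  now rewrite <- Hassoc, (Hassoc (inv f)), Hil, Hl, Hir.
Qed.

Lemma transversal_decomp g : exists z f, H z /\ In f F /\ g = mul z f.
Proof.
  destruct HG as (Hassoc & _ & Hr & Hil & _).
  destruct (proj1 HF g) as (f & Hf & Hfg).
  exists (mul g (inv f)), f; split; [|split]; auto.
  - rewrite <- inv_mul_inv; now apply HH.
  - now rewrite <- Hassoc, Hil, Hr.
Qed.

Lemma phi_one : phi one = 0.
Proof.
  destruct HH as (H1 & _).
  pose proof (proj1 Hphi one one H1 H1) as E.
  rewrite (proj1 (proj2 HG)) in E; lia.
Qed.

Lemma p_mul_subgroup z g : H z -> p (mul z g) = phi z + p g.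
Proof.
  intros Hz; destruct (transversal_decomp g) as (z' & f & Hz' & Hf & ->).
  destruct HH as (_ & HM & _).
  rewrite (proj1 HG), !Hp by auto; now apply Hphi.
Qed.

Lemma p_transversal f : In f F -> p f = 0.
Proof.
  intros Hf; rewrite <- (proj1 (proj2 HG) f), Hp by (auto; apply HH).
  exact phi_one.
Qed.

(* [is_imp] only inspects level 0; translating by [H] shifts all levels equally. *)
Lemma imp_bound s n g : is_imp mul p s n -> Z.abs (p (mul g s) - p g) <= n.
Proof.
  intros [_ Hn]; destruct (transversal_decomp g) as (z & f & Hz & Hf & ->).
  specialize (Hn f (p_transversal f Hf)).
  rewrite <- (proj1 HG), !(p_mul_subgroup z) by exact Hz; lia.
Qed.

Lemma Delta_bound S D :
  is_Delta mul p S D -> forall g s, In s S -> Z.abs (p (mul g s) - p g) <= D.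
Proof.
  intros [HD _] g s Hs; destruct (HD s Hs) as (n & Hn & HnD).
  pose proof (imp_bound s n g Hn); lia.
Qed.

Lemma level_nonempty : In one F -> forall k, exists g, p g = k.
Proof.
  intros H1 k; destruct (proj2 (proj2 Hphi) k) as (z & Hz & <-).
  exists (mul z one); now apply Hp.
Qed.

End Projection.

Section Blocking.
Context {G A : Type} (p : G -> Z).

Lemma blocking_extend (Phi : (G -> A) -> G -> A) (V L L' : G -> Prop) (u x : G -> A) :
  blocking Phi V L u -> (forall g, L g -> x g = u g) -> (forall g, L g -> L' g) ->
  blocking Phi V L' x.
Proof.
  intros Hu Hxu HLL' X Y HX HY.
  apply Hu; intros g Hg; rewrite <- Hxu by exact Hg; auto.
Qed.

Lemma blocking_level_in_domain (Phi : (G -> A) -> G -> A) a b c d (u : G -> A) g :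
  blocking Phi (section p a b) (section p c d) u -> a <= p g <= b ->
  c <= p g <= d \/ (forall y y' : A, y = y').
Proof.
  intros Hu Hg.
  assert (Hdec : {c <= p g <= d} + {~ c <= p g <= d})
    by (destruct (Z_le_dec c (p g)), (Z_le_dec (p g) d); [left; lia | right; lia ..]).
  destruct Hdec as [Hin | Hout]; [now left | right; intros y y'].
  set (overwrite y0 h := if Z.eq_dec (p h) (p g) then y0 else u h).
  assert (Hext : forall y0 h, section p c d h -> overwrite y0 h = u h).
  { intros y0 h Hh; unfold overwrite, section in *; destruct Z.eq_dec; [lia | auto]. }
  pose proof (Hu (overwrite y) (overwrite y') (Hext y) (Hext y') 0%nat g Hg) as E.
  unfold overwrite in E; simpl in E; now destruct Z.eq_dec.
Qed.

Lemma blocking_window_in_domain (Phi : (G -> A) -> G -> A) a b c d (u : G -> A) :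
  (forall k, exists g, p g = k) -> a <= b ->
  blocking Phi (section p a b) (section p c d) u ->
  (c <= a /\ b <= d) \/ (forall y y' : A, y = y').
Proof.
  intros Hlevel Hab Hu.
  destruct (Hlevel a) as (ga & Ea), (Hlevel b) as (gb & Eb).
  destruct (blocking_level_in_domain Phi a b c d u ga Hu ltac:(lia)); [|now right].
  destruct (blocking_level_in_domain Phi a b c d u gb Hu ltac:(lia)); [|now right].
  left; lia.
Qed.

Variables (mul : G -> G -> G) (S : list G) (mu : ({s : G | In s S} -> A) -> A).

Lemma CA_local (X Y : G -> A) g :
  (forall s, In s S -> X (mul g s) = Y (mul g s)) -> CA mul S mu X g = CA mul S mu Y g.
Proof.
  intros Hagree; unfold CA; f_equal.
  apply functional_extensionality; intros [s Hs]; simpl; auto.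
Qed.

Variable D : Z.
Hypothesis HD : forall g s, In s S -> Z.abs (p (mul g s) - p g) <= D.

Lemma CA_iter_agree_between (X Y : G -> A) a1 b1 a2 b2 :
  sec_length a1 b1 >= D -> sec_length a2 b2 >= D ->
  (forall t g, section p a1 b1 g ->
     Nat.iter t (CA mul S mu) X g = Nat.iter t (CA mul S mu) Y g) ->
  (forall t g, section p a2 b2 g ->
     Nat.iter t (CA mul S mu) X g = Nat.iter t (CA mul S mu) Y g) ->
  (forall g, section p a1 b2 g -> X g = Y g) ->
  forall t g, section p a1 b2 g ->
     Nat.iter t (CA mul S mu) X g = Nat.iter t (CA mul S mu) Y g.
Proof.
  unfold sec_length, section; intros Hl1 Hl2 HV1 HV2 H0 t.
  induction t as [|t IH]; intros g Hg; [now apply H0|].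
  destruct (Z_le_dec (p g) b1); [apply HV1; lia|].
  destruct (Z_le_dec a2 (p g)); [apply HV2; lia|].
  apply CA_local; intros s Hs; apply IH.
  pose proof (HD g s Hs); lia.
Qed.

End Blocking.

Theorem lemma4
  (G : Type) (mul : G -> G -> G) (one : G) (inv : G -> G)
  (HG : group_axioms mul one inv) (Hfg : finitely_generated mul one inv)
  (A : Type) (HA : exists enumA : list A, forall a : A, In a enumA)
  (H : G -> Prop) (HH : subgroup mul one inv H)
  (phi : G -> Z) (Hphi : iso_to_Z mul H phi)
  (F : list G) (HF1 : In one F) (HF : right_transversal mul inv H F)
  (p : G -> Z) (Hp : is_projection mul H phi F p)
  (S : list G) (mu : ({s : G | In s S} -> A) -> A)
  (Delta : Z) (HDelta : is_Delta mul p S Delta)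
  (p1 q1 a1 b1 p2 q2 a2 b2 : Z)
  (Hpq1 : p1 <= q1) (Hpq2 : p2 <= q2) (Hab1 : a1 <= b1) (Hab2 : a2 <= b2)
  (u1 u2 : G -> A)
  (Hu1 : blocking (CA mul S mu) (section p a1 b1) (section p p1 q1) u1)
  (Hu2 : blocking (CA mul S mu) (section p a2 b2) (section p p2 q2) u2)
  (Hl1 : sec_length a1 b1 >= Delta) (Hl2 : sec_length a2 b2 >= Delta)
  (Hq1p2 : q1 < p2) (Ha1b2 : a1 <= b2)
  (x : G -> A)
  (Hx1 : forall g, section p p1 q1 g -> x g = u1 g)
  (Hx2 : forall g, section p p2 q2 g -> x g = u2 g) :
  blocking (CA mul S mu) (section p a1 b2) (section p p1 q2) x.
Proof.
  pose proof (level_nonempty mul one H phi Hphi F p Hp HF1) as Hlevel.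
  pose proof (Delta_bound mul one inv HG H HH phi Hphi F HF p Hp S Delta HDelta) as Hdisp.
  destruct (blocking_window_in_domain p _ _ _ _ _ _ Hlevel Hab1 Hu1) as [[Hp1 _] | Htriv];
    [| intros X Y _ _ t g _; apply Htriv].
  destruct (blocking_window_in_domain p _ _ _ _ _ _ Hlevel Hab2 Hu2) as [[_ Hq2] | Htriv];
    [| intros X Y _ _ t g _; apply Htriv].
  intros X Y HX HY.
  apply (CA_iter_agree_between p mul S mu Delta Hdisp X Y a1 b1 a2 b2 Hl1 Hl2).
  - refine (blocking_extend _ _ _ (section p p1 q2) u1 x Hu1 Hx1 _ X Y HX HY).
    unfold section; intros; lia.
  - refine (blocking_extend _ _ _ (section p p1 q2) u2 x Hu2 Hx2 _ X Y HX HY).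
    unfold section; intros; lia.
  - intros g Hg; unfold section in *; rewrite HX, HY by lia; reflexivity.
Qed.
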